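(* Let $m \ge 1$ and $n \ge 2m$ be integers. Then for every real $r$ with $|r|<1$, $$\int_{-1}^1 \frac{T_n(s)(1-s^2)^{m-\frac{1}{2}}}{s-r}\,ds = \pi(-1)^{m+1}\left(\frac{1}{2}\right)^{2m-1}\sum_{j=0}^{2m-1}(-1)^j\binom{2m-1}{j}T_{n+1-2m+2j}(r),$$ where the integral is a Cauchy principal-value integral.
   Context: $T_k$ denotes the Tchebyshev polynomial of the first kind, $T_k(s)=\cos(k\cos^{-1}s)$, $k=0,1,2,\dots$. The integral over $(-1,1)$ with the singular point $s=r\in(-1,1)$ is understood in the Cauchy principal-value sense. $\binom{a}{j}=\frac{a!}{j!(a-j)!}$. *)

From Stdlib Require Import Reals.
From Coquelicot Require Import Coquelicot.
Open Scope R_scope.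

Definition chebT (k : nat) (s : R) : R := cos (INR k * acos s).

Definition is_PV_integral (f : R -> R) (a b r v : R) : Prop :=
  (exists delta : R, 0 < delta /\
     forall eps : R, 0 < eps < delta ->
       ex_RInt f a (r - eps) /\ ex_RInt f (r + eps) b) /\
  filterlim (fun eps : R => RInt f a (r - eps) + RInt f (r + eps) b)
            (at_right 0) (locally v).

From Stdlib Require Import Reals Lra Lia.
From Coquelicot Require Import Coquelicot.
Open Scope R_scope.

(* Substituting s = cos t, with r = cos phi, turns the integrand into
   g t = cos (n t) sin^(2m) t / (cos t - r).  Away from t = phi such integrands have
   a primitive b ln ((cos t - r)^2) + h t with h continuous at phi; since
   (cos t - r)^2 = eps^2 at both ends t = acos (r -+ eps) of the excised interval, the
   logarithms cancel and the principal value is the increment of the primitive over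
   [0, PI].  Integrands with such a primitive form a vector space containing 1
   (increment PI), cos (k t) for k >= 1 (increment 0) and 1 / (cos t - r)
   (increment 0).  The recurrences cos ((N+2) t) = 2 cos t cos ((N+1) t) - cos (N t)
   and 2 sin^2 t = 1 - cos (2 t) then give the increment
   PI sin (N phi) sin^(2k) phi / sin phi for cos (N t) sin^(2k) t / (cos t - r),
   2k <= N.  The right-hand side takes this value by the closed form
   sum_j (-1)^j C(M,j) cos (x + 2 j p) = (2 sin p)^M cos (x + M p - M PI / 2). *)

Lemma cos_add_sub x y : cos (x + y) = 2 * cos x * cos y - cos (x - y).
Proof. rewrite cos_plus, cos_minus. ring. Qed.

Lemma sin_add_sub x y : sin (x + y) = 2 * sin x * cos y - sin (x - y).
Proof. rewrite sin_plus, sin_minus. ring. Qed.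

Lemma sin_INR_PI k : sin (INR k * PI) = 0.
Proof. apply sin_eq_0_1. exists (Z.of_nat k). now rewrite <- INR_IZR_INZ. Qed.

Lemma sin_acos_gt_0 x : -1 < x < 1 -> 0 < sin (acos x).
Proof. intros hx. apply sin_gt_0; apply acos_bound_lt; lra. Qed.

Lemma sin_sub_INR_PI z k : sin (z - INR k * PI) = (-1) ^ k * sin z.
Proof.
induction k as [|k IHk].
- simpl. rewrite Rmult_0_l, Rminus_0_r. ring.
- replace (z - INR (S k) * PI) with (z - INR k * PI - PI) by (rewrite S_INR; ring).
  rewrite sin_minus, cos_PI, sin_PI, IHk. simpl. ring.
Qed.

(* Unlike [chebT n], which goes through the clamped [acos], this form is visibly
   continuous at s = -1 and s = 1, where the substitution s = cos t needs it. *)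
Fixpoint cheb_poly (n : nat) (s : R) : R :=
  match n with
  | O => 1
  | S O => s
  | S ((S k) as n') => 2 * s * cheb_poly n' s - cheb_poly k s
  end.

Lemma cheb_poly_cos n t : cheb_poly n (cos t) = cos (INR n * t).
Proof.
revert n; apply Nat.pair_induction.
- now intros ? ? ->.
- simpl. now rewrite Rmult_0_l, cos_0.
- simpl. now rewrite Rmult_1_l.
- intros n IHn IHSn.
  change (cheb_poly (S (S n)) (cos t))
    with (2 * cos t * cheb_poly (S n) (cos t) - cheb_poly n (cos t)).
  rewrite IHn, IHSn.
  replace (INR (S (S n)) * t) with (INR (S n) * t + t) by (rewrite !S_INR; ring).
  rewrite cos_add_sub.
  replace (INR (S n) * t - t) with (INR n * t) by (rewrite S_INR; ring).
  ring.
Qed.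

Lemma continuity_pt_cheb_poly n s : continuity_pt (cheb_poly n) s.
Proof.
revert n; apply Nat.pair_induction.
- now intros ? ? ->.
- apply continuity_pt_const. now intros ? ?.
- apply continuity_pt_id.
- intros n IHn IHSn.
  change (continuity_pt (fun s => 2 * s * cheb_poly (S n) s - cheb_poly n s) s).
  apply continuity_pt_minus; [apply continuity_pt_mult|]; auto.
  apply continuity_pt_scal, continuity_pt_id.
Qed.

Lemma chebT_cheb_poly n s : -1 <= s <= 1 -> chebT n s = cheb_poly n s.
Proof. intros hs. unfold chebT. now rewrite <- cheb_poly_cos, cos_acos. Qed.

Lemma binomial_C_n_0 n : Binomial.C n 0 = 1.
Proof.
unfold Binomial.C. rewrite Nat.sub_0_r. change (INR (Factorial.fact 0)) with 1.
field. apply INR_fact_neq_0.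
Qed.

Lemma binomial_C_n_n n : Binomial.C n n = 1.
Proof.
unfold Binomial.C. rewrite Nat.sub_diag. change (INR (Factorial.fact 0)) with 1.
field. apply INR_fact_neq_0.
Qed.

Lemma sum_alt_binomial_S (a : nat -> R) M :
  sum_f_R0 (fun j => (-1) ^ j * Binomial.C (S M) j * a j) (S M)
  = sum_f_R0 (fun j => (-1) ^ j * Binomial.C M j * a j) M
    - sum_f_R0 (fun j => (-1) ^ j * Binomial.C M j * a (S j)) M.
Proof.
destruct M as [|M].
- simpl. rewrite (binomial_C_n_n 1), !binomial_C_n_0. ring.
- rewrite (decomp_sum (fun j => (-1) ^ j * Binomial.C (S (S M)) j * a j) (S (S M)))
    by lia.
  rewrite (decomp_sum (fun j => (-1) ^ j * Binomial.C (S M) j * a j) (S M)) by lia.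
  simpl Init.Nat.pred.
  rewrite tech5, (tech5 (fun j => (-1) ^ j * Binomial.C (S M) j * a (S j)) M).
  rewrite (sum_eq (fun i => (-1) ^ S i * Binomial.C (S (S M)) (S i) * a (S i))
             (fun i => (-1) ^ S i * Binomial.C (S M) (S i) * a (S i)
                       - (-1) ^ i * Binomial.C (S M) i * a (S i))).
  + rewrite minus_sum, !binomial_C_n_0, !binomial_C_n_n. simpl pow. ring.
  + intros i hi. rewrite <- pascal by lia. simpl pow. ring.
Qed.

Lemma alt_binomial_cos_sum M p x :
  sum_f_R0 (fun j => (-1) ^ j * Binomial.C M j * cos (x + 2 * INR j * p)) M
  = (2 * sin p) ^ M * cos (x + INR M * p - INR M * PI / 2).
Proof.
revert x; induction M as [|M IHM]; intros x.
- simpl. rewrite binomial_C_n_0. f_equal; [ring | f_equal; field].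
- rewrite sum_alt_binomial_S, IHM.
  rewrite (sum_eq _ (fun j => (-1) ^ j * Binomial.C M j * cos (x + 2 * p + 2 * INR j * p)))
    by (intros i _; rewrite S_INR; do 2 f_equal; ring).
  rewrite IHM.
  set (y := x + INR M * p - INR M * PI / 2 + p).
  replace (x + INR M * p - INR M * PI / 2) with (y - p) by (unfold y; ring).
  replace (x + 2 * p + INR M * p - INR M * PI / 2) with (y + p) by (unfold y; ring).
  replace (x + INR (S M) * p - INR (S M) * PI / 2) with (y - PI / 2)
    by (unfold y; rewrite S_INR; field).
  rewrite cos_minus, cos_plus, (cos_minus y (PI / 2)), cos_PI2, sin_PI2.
  simpl pow. ring.
Qed.

Lemma cheb_binomial_sum m n p : (1 <= m)%nat -> (2 * m <= n + 1)%nat ->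
  (-1) ^ (m + 1) * (1 / 2) ^ (2 * m - 1) *
    sum_f_R0 (fun j => (-1) ^ j * Binomial.C (2 * m - 1) j
                       * cos (INR (n + 1 - 2 * m + 2 * j) * p)) (2 * m - 1)
  = sin (INR n * p) * sin p ^ (2 * m - 1).
Proof.
intros hm hn.
set (x := INR (n + 1 - 2 * m) * p).
rewrite (sum_eq _ (fun j => (-1) ^ j * Binomial.C (2 * m - 1) j * cos (x + 2 * INR j * p)))
  by (intros j _; unfold x; rewrite plus_INR, mult_INR; simpl (INR 2); do 2 f_equal; ring).
rewrite alt_binomial_cos_sum.
replace (x + INR (2 * m - 1) * p - INR (2 * m - 1) * PI / 2)
  with (INR n * p - INR m * PI + PI / 2)
  by (unfold x; rewrite !minus_INR, !plus_INR, !mult_INR by lia;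
      simpl (INR 1); simpl (INR 2); field).
rewrite cos_plus, cos_PI2, sin_PI2, sin_sub_INR_PI, Rpow_mult_distr.
replace (m + 1)%nat with (S m) by lia.
assert (Hhalf : (1 / 2) ^ (2 * m - 1) * 2 ^ (2 * m - 1) = 1)
  by (rewrite <- Rpow_mult_distr; replace (1 / 2 * 2) with 1 by field; apply pow1).
assert (Hsign : (-1) ^ m * (-1) ^ m = 1)
  by (rewrite <- Rpow_mult_distr; replace (-1 * -1) with 1 by ring; apply pow1).
change ((-1) ^ S m) with (-1 * (-1) ^ m).
transitivity ((-1) ^ m * (-1) ^ m * ((1 / 2) ^ (2 * m - 1) * 2 ^ (2 * m - 1))
              * sin (INR n * p) * sin p ^ (2 * m - 1)); [ring|].
rewrite Hhalf, Hsign. ring.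
Qed.

Definition has_PV_primitive (r : R) (g : R -> R) (v : R) : Prop :=
  exists (F : R -> R) (b : R) (h : R -> R),
    (forall t, cos t <> r -> is_derive F t (g t)) /\
    (forall t, cos t <> r -> F t = b * ln ((cos t - r) ^ 2) + h t) /\
    continuous h (acos r) /\
    F PI - F 0 = v.

Section PV_primitives.

Variable r : R.
Hypothesis hr : -1 < r < 1.

Lemma has_PV_primitive_ext g g' v v' :
  (forall t, cos t <> r -> g t = g' t) -> v = v' ->
  has_PV_primitive r g v -> has_PV_primitive r g' v'.
Proof.
intros hg <- [F [b [h [HF [Hlog [Hh Hv]]]]]].
exists F, b, h; split; [|split; [|split]]; auto.
intros t ht. rewrite <- hg by exact ht. auto.
Qed.

Lemma has_PV_primitive_lin g1 g2 v1 v2 a c :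
  has_PV_primitive r g1 v1 -> has_PV_primitive r g2 v2 ->
  has_PV_primitive r (fun t => a * g1 t + c * g2 t) (a * v1 + c * v2).
Proof.
intros [F1 [b1 [h1 [HF1 [Hlog1 [Hh1 Hv1]]]]]] [F2 [b2 [h2 [HF2 [Hlog2 [Hh2 Hv2]]]]]].
exists (fun t => a * F1 t + c * F2 t), (a * b1 + c * b2), (fun t => a * h1 t + c * h2 t).
split; [|split; [|split]].
- intros t ht.
  exact (is_derive_plus _ _ _ _ _
           (is_derive_scal _ _ a _ (HF1 t ht)) (is_derive_scal _ _ c _ (HF2 t ht))).
- intros t ht. rewrite Hlog1, Hlog2 by exact ht. ring.
- apply continuity_pt_filterlim.
  apply continuity_pt_plus; apply continuity_pt_scal; now apply continuity_pt_filterlim.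
- rewrite <- Hv1, <- Hv2. ring.
Qed.

Lemma has_PV_primitive_1 : has_PV_primitive r (fun _ => 1) PI.
Proof.
exists (fun t => t), 0, (fun t => t); split; [|split; [|split]].
- intros t _. auto_derive; auto.
- intros t _. ring.
- apply continuity_pt_filterlim, continuity_pt_id.
- ring.
Qed.

Lemma has_PV_primitive_cos_INR N : has_PV_primitive r (fun t => cos (INR (S N) * t)) 0.
Proof.
assert (hk : sin (INR (S N) * PI) = 0) by apply sin_INR_PI.
assert (hN : INR (S N) <> 0) by apply not_0_INR, Nat.neq_succ_0.
set (k := INR (S N)) in *.
set (F := fun t => sin (k * t) / k).
exists F, 0, F; split; [|split; [|split]].
- intros t _. unfold F. auto_derive; auto. now field.
- intros t _. ring.
- apply continuity_pt_filterlim. apply continuity_pt_div; auto.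
  + apply (continuity_pt_comp (fun t => k * t) sin).
    * apply continuity_pt_scal, continuity_pt_id.
    * apply continuity_sin.
  + apply continuity_pt_const. now intros ? ?.
- unfold F. rewrite hk, Rmult_0_r, sin_0. field. exact hN.
Qed.

Lemma has_PV_primitive_inv_cos_sub : has_PV_primitive r (fun t => 1 / (cos t - r)) 0.
Proof.
assert (hsp : 0 < sin (acos r)) by now apply sin_acos_gt_0.
assert (hcp : cos (acos r) = r) by (apply cos_acos; lra).
set (p := acos r) in *.
assert (Hfactor : forall t, cos t <> r ->
  cos t - r = -2 * sin ((t - p) / 2) * sin ((t + p) / 2) /\
  sin ((t - p) / 2) <> 0 /\ sin ((t + p) / 2) <> 0).
{ intros t ht.
  assert (E : cos t - r = -2 * sin ((t - p) / 2) * sin ((t + p) / 2))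
    by (rewrite <- hcp; apply form2).
  split; [exact E|].
  split; intro Z; apply ht, Rminus_diag_uniq; rewrite E, Z; ring. }
exists (fun t => (ln (sin ((t + p) / 2) ^ 2) - ln (sin ((t - p) / 2) ^ 2)) / (2 * sin p)),
  (-1 / (2 * sin p)), (fun t => (2 * ln (sin ((t + p) / 2) ^ 2) + ln 4) / (2 * sin p)).
split; [|split; [|split]].
- (* With A = (t + p) / 2 and B = (t - p) / 2, the derivative is
     (cot A - cot B) / (2 sin p) = - 1 / (2 sin A sin B) = 1 / (cos t - r). *)
  intros t ht. destruct (Hfactor t ht) as [E [Hm Hp]].
  auto_derive.
  + replace ((t + - p) * / 2) with ((t - p) / 2) by field.
    replace ((t + p) * / 2) with ((t + p) / 2) by field.
    repeat split; try lra; apply pow2_gt_0; auto.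
  + replace ((t + - p) * / 2) with ((t - p) / 2) by field.
    replace ((t + p) * / 2) with ((t + p) / 2) by field.
    replace (sin p) with (sin ((t + p) / 2) * cos ((t - p) / 2)
                          - cos ((t + p) / 2) * sin ((t - p) / 2))
      by (rewrite <- sin_minus; f_equal; field).
    rewrite E. field. repeat split; auto.
    rewrite <- sin_minus. replace ((t + p) / 2 - (t - p) / 2) with p by field. lra.
- intros t ht. destruct (Hfactor t ht) as [E [Hm Hp]].
  assert (Pm : 0 < sin ((t - p) / 2) ^ 2) by (apply pow2_gt_0; auto).
  assert (Pp : 0 < sin ((t + p) / 2) ^ 2) by (apply pow2_gt_0; auto).
  replace ((cos t - r) ^ 2) with (4 * (sin ((t - p) / 2) ^ 2 * sin ((t + p) / 2) ^ 2))
    by (rewrite E; ring).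
  rewrite ln_mult, ln_mult by (lra || now apply Rmult_lt_0_compat).
  field. lra.
- fold p. apply continuity_pt_filterlim, derivable_continuous_pt, ex_derive_Reals_0.
  auto_derive. replace ((p + p) * / 2) with p by field. nra.
- replace ((PI + p) / 2) with (PI - (PI - p) / 2) by field.
  replace ((0 - p) / 2) with (- ((0 + p) / 2)) by field.
  rewrite sin_PI_x, sin_neg.
  replace ((- sin ((0 + p) / 2)) ^ 2) with (sin ((0 + p) / 2) ^ 2) by ring.
  unfold Rdiv. ring.
Qed.

Lemma has_PV_primitive_cos_div N :
  has_PV_primitive r (fun t => cos (INR N * t) / (cos t - r))
    (PI * sin (INR N * acos r) / sin (acos r)).
Proof.
assert (hsp : 0 < sin (acos r)) by now apply sin_acos_gt_0.
assert (hcp : cos (acos r) = r) by (apply cos_acos; lra).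
revert N; apply Nat.pair_induction.
- now intros ? ? ->.
- refine (has_PV_primitive_ext _ _ _ _ _ _ has_PV_primitive_inv_cos_sub).
  + intros t _. simpl. now rewrite Rmult_0_l, cos_0.
  + simpl. rewrite Rmult_0_l, sin_0. field. lra.
- refine (has_PV_primitive_ext _ _ _ _ _ _
    (has_PV_primitive_lin _ _ _ _ 1 r has_PV_primitive_1 has_PV_primitive_inv_cos_sub)).
  + intros t ht. replace (INR 1 * t) with t by (simpl; ring). field. now apply Rminus_eq_contra.
  + replace (INR 1 * acos r) with (acos r) by (simpl; ring). field. lra.
- intros N IHN IHSN.
  refine (has_PV_primitive_ext _ _ _ _ _ _
    (has_PV_primitive_lin _ _ _ _ 2 1 (has_PV_primitive_cos_INR N)
       (has_PV_primitive_lin _ _ _ _ (2 * r) (-1) IHSN IHN))).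
  + intros t ht.
    replace (INR (S (S N)) * t) with (INR (S N) * t + t) by (rewrite !S_INR; ring).
    rewrite cos_add_sub.
    replace (INR (S N) * t - t) with (INR N * t) by (rewrite S_INR; ring).
    field. now apply Rminus_eq_contra.
  + replace (INR (S (S N)) * acos r) with (INR (S N) * acos r + acos r)
      by (rewrite !S_INR; ring).
    rewrite sin_add_sub, hcp.
    replace (INR (S N) * acos r - acos r) with (INR N * acos r) by (rewrite S_INR; ring).
    field. lra.
Qed.

Lemma has_PV_primitive_cos_sin_pow k N : (2 * k <= N)%nat ->
  has_PV_primitive r (fun t => cos (INR N * t) * sin t ^ (2 * k) / (cos t - r))
    (PI * sin (INR N * acos r) * sin (acos r) ^ (2 * k) / sin (acos r)).
Proof.
assert (hsp : 0 < sin (acos r)) by now apply sin_acos_gt_0.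
revert N; induction k as [|k IHk]; intros N hN.
- refine (has_PV_primitive_ext _ _ _ _ _ _ (has_PV_primitive_cos_div N)).
  + intros t _. simpl. unfold Rdiv. ring.
  + simpl. unfold Rdiv. ring.
- destruct N as [|[|M]]; [lia|lia|].
  set (X := INR (S (S M))).
  assert (hX2 : INR (S (S (S (S M)))) = X + 2) by (unfold X; rewrite !S_INR; ring).
  assert (hXm2 : INR M = X - 2) by (unfold X; rewrite !S_INR; ring).
  assert (HX := IHk (S (S M)) ltac:(lia)).
  assert (HXp2 := IHk (S (S (S (S M)))) ltac:(lia)).
  assert (HXm2 := IHk M ltac:(lia)).
  rewrite hX2 in HXp2. rewrite hXm2 in HXm2. fold X in HX.
  (* sin^2 t cos (X t) = cos (X t) / 2 - cos ((X + 2) t) / 4 - cos ((X - 2) t) / 4 *)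
  refine (has_PV_primitive_ext _ _ _ _ _ _
    (has_PV_primitive_lin _ _ _ _ (1 / 2) 1 HX
       (has_PV_primitive_lin _ _ _ _ (-1 / 4) (-1 / 4) HXp2 HXm2))).
  + intros t ht. fold X.
    replace (2 * S k)%nat with (2 * k + 2)%nat by lia. rewrite pow_add.
    replace ((X + 2) * t) with (X * t + 2 * t) by ring.
    replace ((X - 2) * t) with (X * t - 2 * t) by ring.
    rewrite cos_add_sub, cos_2a_sin.
    field. now apply Rminus_eq_contra.
  + fold X.
    replace ((X + 2) * acos r) with (X * acos r + 2 * acos r) by ring.
    replace ((X - 2) * acos r) with (X * acos r - 2 * acos r) by ring.
    rewrite sin_add_sub, cos_2a_sin.
    replace (2 * S k)%nat with (2 * k + 2)%nat by lia. rewrite pow_add.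
    field. lra.
Qed.

End PV_primitives.

Lemma is_RInt_cos_subst (f g F : R -> R) (a b : R) : 0 <= a <= b -> b <= PI ->
  (forall s, cos b <= s <= cos a -> continuous f s) ->
  (forall t, a <= t <= b -> sin t * f (cos t) = g t) ->
  (forall t, a <= t <= b -> is_derive F t (g t) /\ continuous g t) ->
  is_RInt f (cos b) (cos a) (F b - F a).
Proof.
intros hab hb hf hfg hF.
assert (hcos : forall t, a <= t <= b -> cos b <= cos t <= cos a)
  by (intros t ht; split; apply cos_decr_1; lra).
assert (Hsubst : is_RInt (fun t => - sin t * f (cos t)) a b (RInt f (cos a) (cos b))).
{ apply (is_RInt_comp f cos (fun t => - sin t)).
  - rewrite Rmin_left, Rmax_right by lra. intros t ht. now apply hf, hcos.
  - intros t _. split.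
    + auto_derive; auto. ring.
    + apply continuity_pt_filterlim, continuity_pt_opp, continuity_sin. }
assert (Hftc : is_RInt (fun t => - g t) a b (- (F b - F a))).
{ apply (is_RInt_opp g a b (minus (F b) (F a))), (is_RInt_derive (V := R_CompleteNormedModule));
  rewrite Rmin_left, Rmax_right by lra; apply hF. }
assert (Hext : is_RInt (fun t => - sin t * f (cos t)) a b (- (F b - F a))).
{ apply (is_RInt_ext (fun t => - g t)); [|exact Hftc].
  rewrite Rmin_left, Rmax_right by lra. intros t ht.
  rewrite <- (hfg t) by lra. apply Ropp_mult_distr_l. }
assert (Hex : ex_RInt f (cos b) (cos a)).
{ apply (ex_RInt_continuous (V := R_CompleteNormedModule)).
  assert (cos b <= cos a) by (apply cos_decr_1; lra).
  rewrite Rmin_left, Rmax_right by lra. exact hf. }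
replace (F b - F a) with (RInt f (cos b) (cos a)).
- now apply (RInt_correct (V := R_CompleteNormedModule)).
- rewrite <- opp_RInt_swap by (now apply ex_RInt_swap).
  rewrite <- (is_RInt_unique _ _ _ _ Hsubst), (is_RInt_unique _ _ _ _ Hext).
  apply Ropp_involutive.
Qed.

Lemma is_PV_integral_ext (f g : R -> R) (a b r v : R) : a < r < b ->
  (forall s, a <= s <= b -> f s = g s) ->
  is_PV_integral f a b r v -> is_PV_integral g a b r v.
Proof.
intros har hfg [[delta [hdelta hex]] hlim].
set (d := Rmin delta (Rmin (r - a) (b - r))).
assert (hd : 0 < d) by (unfold d; repeat apply Rmin_glb_lt; lra).
assert (hdd : d <= delta) by apply Rmin_l.
assert (hdab : d <= r - a /\ d <= b - r)
  by (split; eapply Rle_trans; try apply Rmin_r; apply Rmin_l || apply Rmin_r).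
assert (Hl : forall eps, 0 < eps < d ->
  forall s, Rmin a (r - eps) < s < Rmax a (r - eps) -> f s = g s)
  by (intros eps he s hs; rewrite Rmin_left, Rmax_right in hs by lra; apply hfg; lra).
assert (Hr : forall eps, 0 < eps < d ->
  forall s, Rmin (r + eps) b < s < Rmax (r + eps) b -> f s = g s)
  by (intros eps he s hs; rewrite Rmin_left, Rmax_right in hs by lra; apply hfg; lra).
split.
- exists d. split; [exact hd|]. intros eps he.
  destruct (hex eps ltac:(lra)) as [hexl hexr].
  split; [apply (ex_RInt_ext f g a (r - eps) (Hl eps he) hexl)
        | apply (ex_RInt_ext f g (r + eps) b (Hr eps he) hexr)].
- apply (filterlim_ext_loc (fun eps => RInt f a (r - eps) + RInt f (r + eps) b)); [|exact hlim].
  exists (mkposreal d hd). intros eps heps hpos.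
  change (Rabs (eps - 0) < d) in heps. rewrite Rminus_0_r in heps. apply Rabs_def2 in heps.
  rewrite (RInt_ext f g a (r - eps)), (RInt_ext f g (r + eps) b);
    [reflexivity | apply Hr | apply Hl]; lra.
Qed.

Lemma continuous_acos r : -1 < r < 1 -> continuous acos r.
Proof.
intros hr. apply continuity_pt_filterlim, derivable_continuous_pt, derivable_pt_acos, hr.
Qed.

Lemma PV_remainder_cvg (h : R -> R) (r : R) : -1 < r < 1 -> continuous h (acos r) ->
  filterlim (fun eps => h (acos (r + eps)) - h (acos (r - eps))) (at_right 0) (locally 0).
Proof.
intros hr hh.
assert (Hc : continuous (fun eps => h (acos (r + eps)) - h (acos (r - eps))) 0).
{ apply (continuous_minus (fun e => h (acos (r + e))) (fun e => h (acos (r - e))));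
  apply continuous_comp; try (rewrite ?Rplus_0_r, ?Rminus_0_r; exact hh);
  apply continuous_comp; try (rewrite ?Rplus_0_r, ?Rminus_0_r; now apply continuous_acos).
  - apply (continuous_plus (fun _ => r) (fun e => e)), continuous_id.
    apply continuous_const.
  - apply (continuous_minus (fun _ => r) (fun e => e)), continuous_id.
    apply continuous_const. }
unfold continuous in Hc. rewrite Rplus_0_r, Rminus_0_r, Rminus_eq_0 in Hc.
exact (filterlim_filter_le_1 _ (filter_le_within _) Hc).
Qed.

Section PV_by_substitution.

Variables (f g : R -> R) (r : R).
Hypothesis hr : -1 < r < 1.
Hypothesis hf : forall s, -1 <= s <= 1 -> s <> r -> continuous f s.
Hypothesis hfg : forall t, 0 <= t <= PI -> cos t <> r -> sin t * f (cos t) = g t.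
Hypothesis hg : forall t, cos t <> r -> continuous g t.

Lemma is_RInt_off_singularity (F : R -> R) (a b : R) : 0 <= a <= b -> b <= PI ->
  ~ (cos b <= r <= cos a) ->
  (forall t, cos t <> r -> is_derive F t (g t)) ->
  is_RInt f (cos b) (cos a) (F b - F a).
Proof.
intros hab hb hout HF.
assert (hne : forall t, a <= t <= b -> cos t <> r).
{ intros t ht E. apply hout. rewrite <- E. split; apply cos_decr_1; lra. }
apply (is_RInt_cos_subst f g); try lra.
- intros s hs. apply hf.
  + split; [apply (Rle_trans _ (cos b)) | apply (Rle_trans _ (cos a))];
      try apply COS_bound; lra.
  + intros ->. now apply hout.
- intros t ht. apply hfg; [lra | now apply hne].
- intros t ht. split; [apply HF | apply hg]; now apply hne.
Qed.

Lemma is_PV_integral_cos_subst v : has_PV_primitive r g v -> is_PV_integral f (-1) 1 r v.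
Proof.
intros [F [b [h [HF [Hlog [Hh Hv]]]]]].
set (d := Rmin (1 + r) (1 - r)).
assert (hd : 0 < d) by (unfold d; apply Rmin_glb_lt; lra).
assert (hd1 : d <= 1 + r) by apply Rmin_l.
assert (hd2 : d <= 1 - r) by apply Rmin_r.
assert (Hpieces : forall eps, 0 < eps < d ->
  is_RInt f (-1) (r - eps) (F PI - F (acos (r - eps))) /\
  is_RInt f (r + eps) 1 (F (acos (r + eps)) - F 0)).
{ intros eps he.
  assert (c1 : cos (acos (r - eps)) = r - eps) by (apply cos_acos; lra).
  assert (c2 : cos (acos (r + eps)) = r + eps) by (apply cos_acos; lra).
  assert (B1 := acos_bound (r - eps)). assert (B2 := acos_bound (r + eps)).
  split.
  - rewrite <- cos_PI, <- c1 at 1.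
    apply is_RInt_off_singularity; [lra | lra | lra | exact HF].
  - rewrite <- cos_0, <- c2 at 1.
    apply is_RInt_off_singularity; [lra | lra | lra | exact HF]. }
assert (Hsum : forall eps, 0 < eps < d ->
  F PI - F (acos (r - eps)) + (F (acos (r + eps)) - F 0)
  = v + (h (acos (r + eps)) - h (acos (r - eps)))).
{ intros eps he.
  rewrite (Hlog (acos (r - eps))), (Hlog (acos (r + eps))) by (rewrite cos_acos; lra).
  rewrite !cos_acos by lra.
  replace ((r - eps - r) ^ 2) with ((r + eps - r) ^ 2) by ring.
  rewrite <- Hv. ring. }
split.
- exists d. split; [exact hd|]. intros eps he.
  destruct (Hpieces eps he) as [H1 H2]. split; eexists; eassumption.
- apply (filterlim_ext_loc (fun eps => v + (h (acos (r + eps)) - h (acos (r - eps))))).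
  + exists (mkposreal d hd). intros eps heps hpos.
    change (Rabs (eps - 0) < d) in heps. rewrite Rminus_0_r in heps. apply Rabs_def2 in heps.
    destruct (Hpieces eps ltac:(lra)) as [H1 H2].
    rewrite (is_RInt_unique _ _ _ _ H1), (is_RInt_unique _ _ _ _ H2).
    symmetry. apply Hsum. lra.
  + replace (locally v) with (locally (v + 0)) by (now rewrite Rplus_0_r).
    apply (filterlim_comp_2 (G := locally v) (H := locally 0) (fun _ => v)
      (fun eps => h (acos (r + eps)) - h (acos (r - eps))) Rplus).
    * apply filterlim_const.
    * now apply PV_remainder_cvg.
    * apply (filterlim_plus v 0).
Qed.

End PV_by_substitution.

Lemma continuous_cheb_weight n m r s : -1 <= s <= 1 -> s <> r ->
  continuous (fun s => cheb_poly n s * ((1 - s ^ 2) ^ m * sqrt (1 - s ^ 2)) / (s - r)) s.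
Proof.
intros hs hsr. apply continuity_pt_filterlim, continuity_pt_div.
- apply continuity_pt_mult; [apply continuity_pt_cheb_poly | apply continuity_pt_mult].
  + apply derivable_continuous_pt, ex_derive_Reals_0. auto_derive. easy.
  + apply (continuity_pt_comp (fun s => 1 - s ^ 2) sqrt).
    * apply derivable_continuous_pt, ex_derive_Reals_0. auto_derive. easy.
    * apply continuity_pt_sqrt. nra.
- apply derivable_continuous_pt, ex_derive_Reals_0. auto_derive. easy.
- lra.
Qed.

Lemma cheb_weight_cos n m r t : 0 <= t <= PI ->
  sin t * (cheb_poly n (cos t) * ((1 - cos t ^ 2) ^ m * sqrt (1 - cos t ^ 2)) / (cos t - r))
  = cos (INR n * t) * sin t ^ (2 * (m + 1)) / (cos t - r).
Proof.
intros ht.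
assert (Hsin : 1 - cos t ^ 2 = sin t ^ 2)
  by (rewrite <- (sin2_cos2 t); unfold Rsqr; ring).
rewrite cheb_poly_cos, Hsin, sqrt_pow2 by (apply sin_ge_0; lra).
rewrite <- pow_mult, Nat.mul_add_distr_l, pow_add.
change (2 * 1)%nat with 2%nat. unfold Rdiv. ring.
Qed.

Theorem mainTheorem1 (m n : nat) (hm : (1 <= m)%nat) (hn : (2 * m <= n)%nat)
  (r : R) (hr : Rabs r < 1) :
  is_PV_integral
    (fun s : R => chebT n s * ((1 - s ^ 2) ^ (m - 1) * sqrt (1 - s ^ 2)) / (s - r))
    (-1) 1 r
    (PI * (-1) ^ (m + 1) * (1 / 2) ^ (2 * m - 1) *
       sum_f_R0 (fun j : nat =>
         (-1) ^ j * Binomial.C (2 * m - 1) j * chebT (n + 1 - 2 * m + 2 * j) r)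
       (2 * m - 1)).
Proof.
assert (hr1 : -1 < r < 1) by (apply Rabs_def2 in hr; lra).
assert (hsp : 0 < sin (acos r)) by now apply sin_acos_gt_0.
assert (hm1 : (2 * (m - 1 + 1) = 2 * m)%nat) by lia.
apply (is_PV_integral_ext
  (fun s => cheb_poly n s * ((1 - s ^ 2) ^ (m - 1) * sqrt (1 - s ^ 2)) / (s - r)));
  [lra | intros s hs; now rewrite chebT_cheb_poly |].
apply (is_PV_integral_cos_subst _ (fun t => cos (INR n * t) * sin t ^ (2 * m) / (cos t - r))).
- lra.
- intros s hs hsr. now apply continuous_cheb_weight.
- intros t ht _. now rewrite cheb_weight_cos, hm1.
- intros t ht. apply continuity_pt_filterlim, derivable_continuous_pt, ex_derive_Reals_0.
  auto_derive. lra.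
- refine (has_PV_primitive_ext r _ _ _ _ (fun _ _ => eq_refl) _
    (has_PV_primitive_cos_sin_pow r hr1 m n hn)).
  transitivity (PI * (sin (INR n * acos r) * sin (acos r) ^ (2 * m - 1))).
  + replace (sin (acos r) ^ (2 * m)) with (sin (acos r) * sin (acos r) ^ (2 * m - 1))
      by (rewrite tech_pow_Rmult; f_equal; lia).
    field. lra.
  + rewrite <- cheb_binomial_sum by lia. unfold chebT. ring.
Qed.
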